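(* Let $f\in\mathcal S'(\mathbb R^d)$ (possibly depending on time), $s\ge0$, $r\in[1,\infty]$ and $t>0$. Then $$\|f\|_{\widetilde L^r_t(\dot{\mathbb B}^s_{2,1})}\le\|f\|^\ell_{\widetilde L^r_t(\dot{\mathbb B}^s_{2,1})}+2^{k_0}\|\varepsilon b(\tau)f\|^h_{\widetilde L^r_t(\dot{\mathbb B}^{s+1}_{2,1})}$$ and $$\|f\|_{\widetilde L^r_t(\dot{\mathbb B}^s_{2,1})}\le2^{-k_0}\|(\varepsilon b(\tau))^{-1}f\|^\ell_{\widetilde L^r_t(\dot{\mathbb B}^{s-1}_{2,1})}+\|f\|^h_{\widetilde L^r_t(\dot{\mathbb B}^s_{2,1})}.$$
   Context: Parameters: $\varepsilon\in(0,1]$, $\mu>0$, $\lambda\le1$, $b(t)=(1+t)^\lambda/\mu$, $k_0\in\mathbb Z$ a fixed constant, $J_t=\lfloor\log_2\frac{1}{\varepsilon b(t)}\rfloor-k_0$. $\dot\Delta_j$ are homogeneous Littlewood–Paley blocks. $\|f\|_{\widetilde L^r_t(\dot{\mathbb B}^s_{2,1})}=\sum_{j\in\mathbb Z}2^{js}\|\|\dot\Delta_jf(\tau)\|_{L^2}\|_{L^r(0,t)}$. With $I^\ell_{j,t}=\{\tau\in[0,t]:j\le J_\tau\}$, $I^h_{j,t}=\{\tau\in[0,t]:j\ge J_\tau\}$: $\|f\|^\ell_{\widetilde L^r_t(\dot{\mathbb B}^s_{2,1})}=\sum_{j:I^\ell_{j,t}\neq\emptyset}2^{js}\|\|\dot\Delta_jf(\tau)\|_{L^2}\|_{L^r(I^\ell_{j,t})}$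 and $\|f\|^h_{\widetilde L^r_t(\dot{\mathbb B}^s_{2,1})}$ defined likewise with $I^h_{j,t}$. *)

From mathcomp Require Import all_boot all_order all_algebra.
From mathcomp Require Import all_classical all_reals all_analysis.
From mathcomp Require Import measurable_realfun.
Set Implicit Arguments. Unset Strict Implicit. Unset Printing Implicit Defensive.
Import Order.TTheory GRing.Theory Num.Theory.
Local Open Scope classical_set_scope.
Local Open Scope ring_scope.

Section Defs.
Context {R : realType}.

Definition bfun (mu lam tau : R) : R := (1 + tau) `^ lam / mu.

Definition Jt (eps mu lam : R) (k0 : int) (tau : R) : int :=
  (Num.floor (ln ((eps * bfun mu lam tau)^-1) / ln 2) - k0)%R.

Definition Itime (t : R) : set R := [set tau | 0 <= tau <= t].

Definition Ilow (J : R -> int) (t : R) (j : int) : set R :=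
  [set tau | Itime t tau /\ (j <= J tau)%R].
Definition Ihigh (J : R -> int) (t : R) (j : int) : set R :=
  [set tau | Itime t tau /\ (J tau <= j)%R].

Definition LrI (r : \bar R) (I : set R) (g : R -> \bar R) : \bar R :=
  Lnorm (@lebesgue_measure R) r (fun tau => ((\1_I tau : R)%:E * g tau)%E).

(* In the abstract setting, a j tau stands for || \dot\Delta_j f(tau) ||_{L^2}. *)
Definition LtB (r : \bar R) (s t : R) (a : int -> R -> \bar R) : \bar R :=
  \esum_(j in [set: int]) ((2 `^ (j%:~R * s))%:E * LrI r (Itime t) (a j))%E.

Definition LtBlow (r : \bar R) (s t : R) (J : R -> int) (a : int -> R -> \bar R) : \bar R :=
  \esum_(j in [set j | Ilow J t j !=set0])
     ((2 `^ (j%:~R * s))%:E * LrI r (Ilow J t j) (a j))%E.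

Definition LtBhigh (r : \bar R) (s t : R) (J : R -> int) (a : int -> R -> \bar R) : \bar R :=
  \esum_(j in [set j | Ihigh J t j !=set0])
     ((2 `^ (j%:~R * s))%:E * LrI r (Ihigh J t j) (a j))%E.

Definition meas_on (t : R) (g : R -> \bar R) : Prop := measurable_fun (Itime t) g.

End Defs.

From mathcomp Require Import all_boot all_order all_algebra.
From mathcomp Require Import all_classical all_reals all_analysis.
From mathcomp Require Import measurable_realfun ess_sup_inf ring.
Import Order.TTheory GRing.Theory Num.Theory.
Local Open Scope classical_set_scope.
Local Open Scope ring_scope.

(* Fix a frequency j.  Since J = floor (log2 (1 / (eps b))) - k0, the weight
   2^(j+k0) eps b is at least 1 where J < j, and 2^-(j+k0) / (eps b) is at least 1
   where j <= J.  Split [0,t] into {j <= J} and {J < j}, a subset of {J <= j}; the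
   L^r norm over a union is at most the sum of the norms over the pieces, and the
   weights can be inserted on each piece.  Multiplying by 2^(js) and summing over j
   gives both inequalities. *)

Lemma powR_subadd (R : realType) (q x y : R) : 0 < q <= 1 -> 0 <= x -> 0 <= y ->
  (x + y) `^ q <= x `^ q + y `^ q.
Proof.
move=> /andP[q_gt0 q_le1] x_ge0 y_ge0.
have [xy0|xy_neq0] := eqVneq (x + y) 0.
  move/eqP: xy0; rewrite paddr_eq0// => /andP[/eqP-> /eqP->].
  by rewrite addr0 powR0 ?gt_eqF// addr0.
have xy_gt0 : 0 < x + y by rewrite lt_neqAle eq_sym xy_neq0 addr_ge0.
(* (z/(x+y))^q >= z/(x+y) because q <= 1 *)
have le_powR z : 0 <= z -> z <= x + y -> (x + y) `^ q * (z / (x + y)) <= z `^ q.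
  move=> z_ge0 z_le; have -> : z `^ q = (x + y) `^ q * (z / (x + y)) `^ q.
    by rewrite -powRM ?divr_ge0 ?(ltW xy_gt0)// mulrCA divff ?mulr1// gt_eqF.
  rewrite ler_wpM2l ?powR_ge0//.
  have [->|z_neq0] := eqVneq z 0; first by rewrite mul0r powR_ge0.
  have z_gt0 : 0 < z by rewrite lt_neqAle eq_sym z_neq0.
  by apply: ger1_powR => //; rewrite divr_gt0//= ler_pdivrMr// mul1r.
apply: le_trans (lerD (le_powR x x_ge0 _) (le_powR y y_ge0 _)); last 2 first.
- by rewrite lerDl.
- by rewrite lerDr.
by rewrite -mulrDr -mulrDl divff ?gt_eqF// mulr1.
Qed.

Lemma poweR_subadd (R : realType) (q : R) (x y : \bar R) : 0 < q <= 1 ->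
  (0 <= x)%E -> (0 <= y)%E -> ((x + y) `^ q <= x `^ q + y `^ q)%E.
Proof.
move=> q01 + +; have q_neq0 : q != 0 by case/andP: q01 => /gt_eqF ->.
case: x => [x| |]// x_ge0; case: y => [y| |]// y_ge0.
- by rewrite -EFinD !poweR_EFin -EFinD lee_fin powR_subadd.
- by rewrite addey// poweRyr// addey ?leey// poweR_EFin.
- by rewrite addye// poweRyr// addye ?leey.
- by rewrite addye// poweRyr// addye ?leey.
Qed.

Section Lnorm_restrict.
Context {d} {T : measurableType d} {R : realType}.
Variable mu : {measure set T -> \bar R}.
Local Open Scope ereal_scope.
Implicit Types (p : \bar R) (f g : T -> \bar R) (A B D : set T).

Lemma measurable_poweR_abse f (p : R) : measurable_fun setT f ->
  measurable_fun setT (fun x => `|f x| `^ p).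
Proof.
move=> mf; apply: (measurableT_comp (measurable_poweR p)).
by apply: measurableT_comp mf; exact: abse_measurable.
Qed.

Lemma le_Lnorm p f g : 0 < p -> measurable_fun setT f -> measurable_fun setT g ->
  (forall x, `|f x| <= `|g x|) -> 'N[mu]_p[f] <= 'N[mu]_p[g].
Proof.
move=> + mf mg fg; rewrite unlock; case: p => [p||] //; rewrite ?lte_fin => p_gt0.
  apply: gt0_ler_poweR; rewrite ?invr_ge0 ?(ltW p_gt0)// ?in_itv/= ?leey ?andbT.
  - by apply: integral_ge0 => x _; exact: poweR_ge0.
  - by apply: integral_ge0 => x _; exact: poweR_ge0.
  apply: ge0_le_integral => //; first by move=> x _; exact: poweR_ge0.
  - exact: measurable_poweR_abse.
  - exact: measurable_poweR_abse.
  by move=> x _; apply: gt0_ler_poweR; rewrite ?(ltW p_gt0)// ?in_itv/= ?leey ?abse_ge0.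
by case: ifPn => // _; apply: le_ess_sup; exact: nearW.
Qed.

Lemma LnormZl p f (c : R) : (0 < c)%R -> 0 < p -> measurable_fun setT f ->
  'N[mu]_p[(fun x => c%:E * f x)] = c%:E * 'N[mu]_p[f].
Proof.
move=> c_gt0 + mf; rewrite unlock; case: p => [p||] //; rewrite ?lte_fin => p_gt0.
  under eq_integral => x _ do
    rewrite abseM poweRM ?abse_ge0// gee0_abs ?lee_fin ?(ltW c_gt0)// poweR_EFin.
  rewrite ge0_integralZl_EFin ?powR_ge0//; last 2 first.
  - by move=> x _; exact: poweR_ge0.
  - exact: measurable_poweR_abse.
  rewrite poweRM ?lee_fin ?powR_ge0//; last by apply: integral_ge0 => x _; exact: poweR_ge0.
  by rewrite poweR_EFin -powRrM mulfV ?gt_eqF// powRr1 ?ltW.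
case: ifPn => _; last by rewrite mule0.
rewrite -ess_sup_pZl//; congr ess_sup; apply/funext => x /=.
by rewrite abseM gee0_abs// lee_fin ltW.
Qed.

Lemma restrict_subU_le (phi : \bar R -> \bar R) D A B f :
  phi 0 = 0 -> (forall y, 0 <= phi y) -> D `<=` A `|` B ->
  forall x, phi ((f \_ D) x) <= phi ((f \_ A) x) + phi ((f \_ B) x).
Proof.
move=> phi0 phi_ge0 DAB x; rewrite /patch.
case: ifPn => [/set_mem Dx|_]; last by rewrite phi0 adde_ge0.
case: (DAB x Dx) => [Ax|Bx].
- by rewrite (mem_set Ax) leeDl.
- by rewrite (mem_set Bx) leeDr.
Qed.

Lemma Lnorm_restrict_subU p D A B f : 1 <= p -> D `<=` A `|` B ->
  measurable_fun setT (f \_ D) -> measurable_fun setT (f \_ A) ->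
  measurable_fun setT (f \_ B) ->
  'N[mu]_p[f \_ D] <= 'N[mu]_p[f \_ A] + 'N[mu]_p[f \_ B].
Proof.
move=> + DAB mD mA mB; rewrite unlock; case: p => [p||] //; rewrite ?lee_fin => p_ge1.
  have p_gt0 : (0 < p)%R := lt_le_trans ltr01 p_ge1.
  have int_ge0 (h : T -> \bar R) : 0 <= \int[mu]_x `|h x| `^ p.
    by apply: integral_ge0 => x _; exact: poweR_ge0.
  (* pointwise |f_D|^p <= |f_A|^p + |f_B|^p, then x |-> x^(1/p) is subadditive *)
  have pV01 : (0 < p^-1 <= 1)%R by rewrite invr_gt0 p_gt0 invf_le1.
  apply: le_trans; last by apply: poweR_subadd.
  rewrite -ge0_integralD//; last 4 first.
  - by move=> x _; exact: poweR_ge0.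
  - exact: measurable_poweR_abse.
  - by move=> x _; exact: poweR_ge0.
  - exact: measurable_poweR_abse.
  apply: gt0_ler_poweR; rewrite ?invr_ge0 ?(ltW p_gt0)// ?in_itv/= ?leey ?andbT.
  - exact: int_ge0.
  - by apply: integral_ge0 => x _; rewrite adde_ge0 ?poweR_ge0.
  apply: ge0_le_integral => //; first by move=> x _; exact: poweR_ge0.
  - exact: measurable_poweR_abse.
  - by apply: emeasurable_funD; exact: measurable_poweR_abse.
  move=> x _; apply: (restrict_subU_le (fun y => `|y| `^ p)) => //.
  - by rewrite abse0 poweR0r// gt_eqF.
  - by move=> y; exact: poweR_ge0.
case: ifPn => _; last by rewrite adde0.
apply: le_trans (ess_supD _ _ _); apply: le_ess_sup; apply: nearW => x /=.
by apply: (restrict_subU_le abse) => //; rewrite abse0.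
Qed.

Lemma le_Lnorm_restrict p A B f g : 0 < p -> A `<=` B ->
  measurable_fun setT (f \_ A) -> measurable_fun setT (g \_ B) ->
  (forall x, A x -> `|f x| <= `|g x|) -> 'N[mu]_p[f \_ A] <= 'N[mu]_p[g \_ B].
Proof.
move=> p_gt0 AB mA mB fg; apply: le_Lnorm => // x; rewrite /patch.
case: ifPn => [/set_mem Ax|_]; last by rewrite abse0 abse_ge0.
by rewrite mem_set ?fg//; exact: AB.
Qed.

Lemma le_Lnorm_restrict_weight p A B f (v : T -> R) (c : R) :
  0 < p -> (0 < c)%R -> A `<=` B ->
  measurable_fun setT (f \_ A) -> measurable_fun setT ((fun x => (v x)%:E * f x) \_ B) ->
  (forall x, A x -> (1 <= c * v x)%R) ->
  'N[mu]_p[f \_ A] <= c%:E * 'N[mu]_p[(fun x => (v x)%:E * f x) \_ B].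
Proof.
move=> p_gt0 c_gt0 AB mA mB cv_ge1; rewrite -LnormZl// -erestrict_scale.
apply: le_Lnorm_restrict => //; first by rewrite erestrict_scale; exact: emeasurable_funM.
move=> x Ax; have cv_ge0 : (0 <= c * v x)%R := le_trans ler01 (cv_ge1 x Ax).
rewrite muleA -EFinM abseM abse_EFin ger0_norm //.
by apply: lee_pemull; rewrite ?abse_ge0 ?lee_fin ?cv_ge1.
Qed.

Lemma measurable_restrict_subset D A f : measurable D -> measurable A -> A `<=` D ->
  measurable_fun D f -> measurable_fun setT (f \_ A).
Proof.
by move=> mD mA AD mf; apply/(measurable_restrictT _ _).1 => //; exact: measurable_funS mf.
Qed.

End Lnorm_restrict.

Lemma measurable_funV_gt0 {d} {T : measurableType d} {R : realType} {D : set T}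
    {w : T -> R} : measurable D -> (forall x, D x -> 0 < w x) ->
  measurable_fun D w -> measurable_fun D (fun x => (w x)^-1).
Proof.
move=> mD w_gt0 mw; apply: (eq_measurable_fun (fun x => expR (- ln (w x)))).
  by move=> x /[!inE] Dx; rewrite -lnV ?posrE ?w_gt0// lnK// posrE invr_gt0 w_gt0.
apply: measurableT_comp (@measurable_expR R) _.
exact: measurable_funN (measurableT_comp (@measurable_ln R) mw).
Qed.

Lemma le_esumDZl (R : realType) (T : choiceType) (I : set T) (a b e : T -> \bar R)
    (c : R) : 0 <= c -> (forall i, I i -> 0 <= b i)%E -> (forall i, I i -> 0 <= e i)%E ->
  (forall i, I i -> a i <= b i + c%:E * e i)%E ->
  (\esum_(i in I) a i <= \esum_(i in I) b i + c%:E * \esum_(i in I) e i)%E.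
Proof.
move=> c_ge0 b_ge0 e_ge0 abe; apply: le_trans (le_esum abe) _.
rewrite esumD//; last by move=> i Ii; rewrite mule_ge0 ?lee_fin ?e_ge0.
rewrite leeD2l// ge_ereal_sup//= => _ [X [finX XI]] <-.
rewrite fsbig_finite//= big_seq -ge0_sume_distrr -?big_seq; last first.
  by move=> i; rewrite in_fset_set// inE => /XI; exact: e_ge0.
apply: lee_wpmul2l; first by rewrite lee_fin.
by rewrite -fsbig_finite//; apply: ereal_sup_ubound; exists X.
Qed.

Lemma esum_setT_vanishing (R : realType) (T : choiceType) (P : set T) (a : T -> \bar R) :
  (forall i, ~ P i -> a i = 0%E) -> \esum_(i in P) a i = \esum_(i in [set: T]) a i.
Proof.
move=> a0; rewrite esum_mkcond; apply: eq_esum => i _.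
by case: ifPn => // /negP iP; rewrite a0// => Pi; apply: iP; rewrite inE.
Qed.

Lemma ln_div_ln_ltr (R : realType) (b y n : R) : 1 < b -> 0 < y ->
  (ln y / ln b < n) = (y < b `^ n).
Proof.
move=> b_gt1 y_gt0; have b_gt0 : 0 < b := lt_trans ltr01 b_gt1.
by rewrite ltr_pdivrMr ?ln_gt0// -ln_powR ltr_ln ?posrE ?powR_gt0.
Qed.

Lemma measurable_Itime {R : realType} (t : R) : measurable (Itime t).
Proof.
rewrite (_ : Itime t = `[0, t]%classic); first exact: measurable_itv.
by apply/seteqP; split => tau /=; rewrite in_itv.
Qed.

Lemma LrIE (R : realType) (r : \bar R) (I : set R) (g : R -> \bar R) :
  LrI r I g = 'N[lebesgue_measure]_r[g \_ I]%E.
Proof.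
congr Lnorm; apply/funext => tau; rewrite /patch indicE.
by case: ifPn; rewrite ?mul1e ?mul0e.
Qed.

Lemma LrI_ge0 (R : realType) (r : \bar R) (I : set R) (g : R -> \bar R) : (0 <= LrI r I g)%E.
Proof. exact: Lnorm_ge0. Qed.

Lemma LrI_set0 (R : realType) (r : \bar R) (g : R -> \bar R) : r != 0%E -> LrI r set0 g = 0%E.
Proof. by move=> r_neq0; rewrite LrIE erestrict_set0 Lnorm0. Qed.

Section frequency_parts.
Context {R : realType}.
Implicit Types (r : \bar R) (s t : R) (J : R -> int) (a : int -> R -> \bar R).

Lemma LtBlowE r s t J a : r != 0%E -> LtBlow r s t J a =
  (\esum_(j in [set: int]) (2 `^ (j%:~R * s))%:E * LrI r (Ilow J t j) (a j))%E.
Proof.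
move=> r_neq0; apply: esum_setT_vanishing => j /= Ilow0.
rewrite (_ : Ilow J t j = set0) ?LrI_set0 ?mule0//.
by apply/seteqP; split=> // tau ?; apply: Ilow0; exists tau.
Qed.

Lemma LtBhighE r s t J a : r != 0%E -> LtBhigh r s t J a =
  (\esum_(j in [set: int]) (2 `^ (j%:~R * s))%:E * LrI r (Ihigh J t j) (a j))%E.
Proof.
move=> r_neq0; apply: esum_setT_vanishing => j /= Ihigh0.
rewrite (_ : Ihigh J t j = set0) ?LrI_set0 ?mule0//.
by apply/seteqP; split=> // tau ?; apply: Ihigh0; exists tau.
Qed.

Lemma Ilow_subset t J j : Ilow J t j `<=` Itime t. Proof. by move=> ? []. Qed.

Lemma Ihigh_subset t J j : Ihigh J t j `<=` Itime t. Proof. by move=> ? []. Qed.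

End frequency_parts.

Lemma eq_powR_mul (R : realType) (x a b c e : R) : x != 0 -> a + b = c + e ->
  x `^ a * x `^ b = x `^ c * x `^ e.
Proof. by move=> x_neq0 abce; rewrite -!powRD ?x_neq0 ?implybT// abce. Qed.

(* [Jt eps mu lam k0] is convertible to [cutoff (fun tau => eps * bfun mu lam tau) k0]. *)
Definition cutoff {R : realType} (w : R -> R) (k0 : int) (tau : R) : int :=
  (Num.floor (ln ((w tau)^-1) / ln 2) - k0)%R.

Section cutoff_split.
Context {R : realType}.
Variables (w : R -> R) (k0 : int) (t : R) (r : \bar R).
Hypothesis w_gt0 : forall tau, Itime t tau -> 0 < w tau.
Hypothesis mw : measurable_fun (Itime t) w.
Hypothesis r_ge1 : (1 <= r)%E.

Local Notation J := (cutoff w k0).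
Local Notation L := (fun tau => ln ((w tau)^-1) / ln 2).

Let mL : measurable_fun (Itime t) L.
Proof.
apply: measurable_funM; last exact: measurable_cst.
apply: measurableT_comp (@measurable_ln R) _.
apply: measurable_funV_gt0; [exact: measurable_Itime|exact: w_gt0|exact: mw].
Qed.

Let r_gt0 : (0 < r)%E. Proof. exact: lt_le_trans r_ge1. Qed.

Lemma cutoff_ge j tau : (j <= J tau) = ((j + k0)%:~R <= L tau).
Proof. by rewrite /cutoff lerBrDr floor_ge_int. Qed.

Lemma cutoff_lt j tau : (J tau < j) = (L tau < (j + k0)%:~R).
Proof. by rewrite /cutoff ltrBlDr floor_lt_int. Qed.

Lemma measurable_Ilow j : measurable (Ilow J t j).
Proof.
have := mL (measurable_Itime t) _ (measurable_itv `[(j + k0)%:~R, +oo[).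
congr measurable; apply/seteqP; split => tau [It h]; split => //=.
- by move: h; rewrite /= in_itv/= andbT cutoff_ge.
- by rewrite in_itv/= andbT -cutoff_ge.
Qed.

Lemma measurable_cutoff_lt j : measurable (Itime t `&` [set tau | J tau < j]).
Proof.
have := mL (measurable_Itime t) _ (measurable_itv `]-oo, (j + k0)%:~R[).
congr measurable; apply/seteqP; split => tau [It h]; split => //=.
- by move: h; rewrite /= in_itv/= cutoff_lt.
- by rewrite in_itv/= -cutoff_lt.
Qed.

Lemma measurable_Ihigh j : measurable (Ihigh J t j).
Proof.
rewrite (_ : Ihigh J t j = Itime t `&` [set tau | J tau < j + 1]).
  exact: measurable_cutoff_lt.
by apply/seteqP; split => tau [It]; rewrite /= ltzD1.
Qed.

Lemma cutoff_lt_weight_ge1 j tau : Itime t tau -> J tau < j ->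
  1 <= 2 `^ (j + k0)%:~R * w tau.
Proof.
move=> It; rewrite cutoff_lt ln_div_ln_ltr ?ltr1n ?invr_gt0 ?w_gt0//.
by rewrite -div1r ltr_pdivrMr ?w_gt0// => /ltW.
Qed.

Lemma cutoff_ge_weightV_ge1 j tau : Itime t tau -> j <= J tau ->
  1 <= 2 `^ (- (j + k0)%:~R) * (w tau)^-1.
Proof.
move=> It; rewrite cutoff_ge leNgt ln_div_ln_ltr ?ltr1n ?invr_gt0 ?w_gt0// -leNgt.
by rewrite powRN mulrC ler_pdivlMr ?powR_gt0// mul1r.
Qed.

Section block.
Variable j : int.
Context {a : R -> \bar R}.
Hypothesis ma : measurable_fun (Itime t) a.

Let mrestrict {b : R -> \bar R} {A : set R} : measurable A -> A `<=` Itime t ->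
  measurable_fun (Itime t) b -> measurable_fun setT (b \_ A).
Proof. exact: measurable_restrict_subset (measurable_Itime t). Qed.

Let mweighted {v : R -> R} : measurable_fun (Itime t) v ->
  measurable_fun (Itime t) (fun tau => ((v tau)%:E * a tau)%E).
Proof. by move=> mv; apply: emeasurable_funM => //; exact/measurable_EFinP. Qed.

Lemma LrI_le_low_weighted_high : (LrI r (Itime t) a <= LrI r (Ilow J t j) a
  + (2 `^ (j + k0)%:~R)%:E * LrI r (Ihigh J t j) (fun tau => (w tau)%:E * a tau))%E.
Proof.
rewrite !LrIE.
have Ilt_sub : Itime t `&` [set tau | J tau < j] `<=` Itime t by move=> ? [].
apply: le_trans (Lnorm_restrict_subU lebesgue_measure r (Itime t) (Ilow J t j)
  (Itime t `&` [set tau | J tau < j]) a r_ge1 _ _ _ _) _.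
- by move=> tau It; have [jJ|Jj] := leP j (J tau); [left|right].
- exact (mrestrict (measurable_Itime t) (@subset_refl _ _) ma).
- exact (mrestrict (measurable_Ilow j) (Ilow_subset t J j) ma).
- exact (mrestrict (measurable_cutoff_lt j) Ilt_sub ma).
apply: leeD2l; apply: le_Lnorm_restrict_weight => //.
- by move=> tau [It /ltW]; split.
- exact (mrestrict (measurable_cutoff_lt j) Ilt_sub ma).
- exact (mrestrict (measurable_Ihigh j) (Ihigh_subset t J j) (mweighted mw)).
- by move=> tau [It Jj]; exact: cutoff_lt_weight_ge1.
Qed.

Lemma LrI_le_weighted_low_high : (LrI r (Itime t) a <=
  (2 `^ (- (j + k0)%:~R))%:E * LrI r (Ilow J t j) (fun tau => (w tau)^-1%:E * a tau)
  + LrI r (Ihigh J t j) a)%E.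
Proof.
rewrite !LrIE; apply: le_trans (Lnorm_restrict_subU lebesgue_measure r (Itime t)
  (Ilow J t j) (Ihigh J t j) a r_ge1 _ _ _ _) _.
- by move=> tau It; have [jJ|/ltW Jj] := leP j (J tau); [left|right].
- exact (mrestrict (measurable_Itime t) (@subset_refl _ _) ma).
- exact (mrestrict (measurable_Ilow j) (Ilow_subset t J j) ma).
- exact (mrestrict (measurable_Ihigh j) (Ihigh_subset t J j) ma).
apply: leeD2r; apply: le_Lnorm_restrict_weight => //.
- exact (mrestrict (measurable_Ilow j) (Ilow_subset t J j) ma).
- exact (mrestrict (measurable_Ilow j) (Ilow_subset t J j)
    (mweighted (measurable_funV_gt0 (measurable_Itime t) w_gt0 mw))).
- by move=> tau [It jJ]; exact: cutoff_ge_weightV_ge1.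
Qed.

End block.

Let r_neq0 : r != 0%E. Proof. by rewrite gt_eqF. Qed.

Lemma LtB_le_low_weighted_high s (a : int -> R -> \bar R) :
  (forall j, measurable_fun (Itime t) (a j)) ->
  (LtB r s t a <= LtBlow r s t J a
     + (2 `^ k0%:~R)%:E * LtBhigh r (s + 1) t J (fun j tau => (w tau)%:E * a j tau))%E.
Proof.
move=> ma; rewrite /LtB LtBlowE// LtBhighE//.
apply: le_esumDZl => [|j _|j _|j _]; rewrite ?mule_ge0 ?lee_fin ?powR_ge0 ?LrI_ge0//.
apply: le_trans (lee_wpmul2l _ (LrI_le_low_weighted_high j (ma j))) _.
  by rewrite lee_fin powR_ge0.
rewrite ge0_muleDr ?LrI_ge0 ?mule_ge0 ?lee_fin ?powR_ge0 ?LrI_ge0//.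
apply: leeD2l; rewrite !muleA -!EFinM (@eq_powR_mul _ _ _ _ k0%:~R (j%:~R * (s + 1)))//.
by rewrite intrD; ring.
Qed.

Lemma LtB_le_weighted_low_high s (a : int -> R -> \bar R) :
  (forall j, measurable_fun (Itime t) (a j)) ->
  (LtB r s t a <= (2 `^ (- k0%:~R))%:E
       * LtBlow r (s - 1) t J (fun j tau => (w tau)^-1%:E * a j tau)
     + LtBhigh r s t J a)%E.
Proof.
move=> ma; rewrite /LtB LtBlowE// LtBhighE// addeC.
apply: le_esumDZl => [|j _|j _|j _]; rewrite ?mule_ge0 ?lee_fin ?powR_ge0 ?LrI_ge0//.
apply: le_trans (lee_wpmul2l _ (LrI_le_weighted_low_high j (ma j))) _.
  by rewrite lee_fin powR_ge0.
rewrite ge0_muleDr ?LrI_ge0 ?mule_ge0 ?lee_fin ?powR_ge0 ?LrI_ge0// addeC.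
apply: leeD2l; rewrite !muleA -!EFinM (@eq_powR_mul _ _ _ _ (- k0%:~R) (j%:~R * (s - 1)))//.
by rewrite intrD; ring.
Qed.

End cutoff_split.

Theorem lemma3p1 (R : realType) (eps mu lam : R) (k0 : int)
  (a : int -> R -> \bar R) (s : R) (r : \bar R) (t : R) :
  0 < eps <= 1 -> 0 < mu -> lam <= 1 ->
  (forall j tau, (0 <= a j tau)%E) ->
  (forall j, meas_on t (a j)) ->
  0 <= s -> (1 <= r)%E -> 0 < t ->
  let J := Jt eps mu lam k0 in
  (LtB r s t a <=
     LtBlow r s t J a
     + (2 `^ k0%:~R)%:E
       * LtBhigh r (s + 1) t J (fun j tau => (eps * bfun mu lam tau)%:E * a j tau))%E
  /\
  (LtB r s t a <=
     (2 `^ (- k0%:~R))%:E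
       * LtBlow r (s - 1) t J (fun j tau => (eps * bfun mu lam tau)^-1%:E * a j tau)
     + LtBhigh r s t J a)%E.
Proof.
move=> /andP[eps_gt0 _] mu_gt0 _ _ ma _ r_ge1 _ J.
have w_gt0 tau : Itime t tau -> 0 < eps * bfun mu lam tau.
  move=> /andP[tau_ge0 _]; rewrite mulr_gt0 ?divr_gt0 ?powR_gt0//.
  by rewrite (lt_le_trans ltr01)// lerDl.
have mw : measurable_fun (Itime t) (fun tau => eps * bfun mu lam tau).
  apply: measurable_funS (subsetT _) _ => //.
  apply: measurable_funM; first exact: measurable_cst.
  apply: measurable_funM; last exact: measurable_cst.
  apply: (measurableT_comp (@measurable_powR R lam)).
  by apply: measurable_funD => //; exact: measurable_cst.
by split; [exact: LtB_le_low_weighted_high|exact: LtB_le_weighted_low_high].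
Qed.
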